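(* Let $(R,B)$ be an EIC problem with problem graph $G$, and let $\mathcal{A}_{(R,B)}$ be the image of its column repetition function. Then the minimum length $(C)_{(R,B)}$ of a centralized linear broadcast solution to $(R,B)$ equals $\mathrm{rminrk}_2(G,\mathcal{A}_{(R,B)})$, the minimum of $\mathrm{rk}_2(A')$ over all $A'\in\mathcal{A}_{(R,B)}$ that fit $G$.
   Context: Let $n,m$ be positive integers. An EIC problem is a pair $(R,B)$ of matrices in $\mathbb{F}_2^{n\times m}$ with disjoint supports; node $u$ needs block $a$ if $R_{ua}=1$ and has block $a$ if $B_{ua}=1$. Requirement pairs: $P=\{(u,a): R_{ua}=1\}$. The problem graph $G=(V,E)$ is the directed graph with vertices $V=\{v_{(u,a)}:(u,a)\in P\}$ and an edge from $v_{(u,a)}$ to $v_{(w,b)}$ iff $B_{ub}=1$ or $a=b$. $B_u$ is the $u$-th row of $B$, $\mathrm{diag}(B_u)$ the diagonal matrix with $B_u$ on the diagonal, $\boldsymbol e_a$ the $a$-th standard basis row vector of $\mathbb{F}_2^m$. A matrix $A'\in\mathbb{F}_2^{|V|\times|V|}$ (indexed by $V$) fits $G$ if its diagonal entries are all $1$ and $A'_{xy}=0$ whenever $x\ne y$ and $(x,y)\notin E$. The column repetition function $\phi_{(R,B)}:\mathbb{F}_2^{|V|\times m}\to\mathbb{F}_2^{|V|\times|V|}$ sends $A$ to the matrix whose column indexed by $v_{(u,a)}$ is the $a$-th column of $A$; $\mathcal{A}_{(R,B)}$ is its image. A centralized linear broadcast solution is $\beta\in\mathbb{F}_2^{h\times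 m}$ such that for every $(u,a)\in P$ there is $\boldsymbol\alpha\in\mathbb{F}_2^{h+m}$ with $\boldsymbol e_a=\boldsymbol\alpha\cdot\left[\begin{smallmatrix}\beta\\ \mathrm{diag}(B_u)\end{smallmatrix}\right]$; its length is $h$, and $(C)_{(R,B)}$ denotes the minimum length. *)

From HB Require Import structures.
From mathcomp Require Import all_boot all_order all_algebra.
Set Implicit Arguments. Unset Strict Implicit. Unset Printing Implicit Defensive.
Import GRing.Theory.
Local Open Scope ring_scope.

Definition F2 := 'F_2.

Definition disjoint_supports (n m : nat) (R B : 'M[F2]_(n, m)) : Prop :=
  forall (u : 'I_n) (a : 'I_m), ~ (R u a = 1 /\ B u a = 1).

Notation reqT R := {p : 'I__ * 'I__ | R p.1 p.2 == 1}.

(* Vertices of the problem graph, indexed by 'I_#|V| via enum_val. *)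
Definition nV (n m : nat) (R : 'M[F2]_(n, m)) : nat := #|{: reqT R}|.

Definition vtx (n m : nat) (R : 'M[F2]_(n, m)) (i : 'I_(nV R)) : 'I_n * 'I_m :=
  val (enum_val (i : 'I_#|{: reqT R}|)).

Definition pg_edge (n m : nat) (R B : 'M[F2]_(n, m)) (x y : 'I_(nV R)) : Prop :=
  B (vtx x).1 (vtx y).2 = 1 \/ (vtx x).2 = (vtx y).2.
Arguments pg_edge {n m} R B x y.

Definition fits (n m : nat) (R B : 'M[F2]_(n, m)) (A' : 'M[F2]_(nV R)) : Prop :=
  (forall x, A' x x = 1) /\
  (forall x y, x <> y -> ~ pg_edge R B x y -> A' x y = 0).
Arguments fits {n m} R B A'.

Definition col_rep (n m : nat) (R : 'M[F2]_(n, m)) (A : 'M[F2]_(nV R, m))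
  : 'M[F2]_(nV R) :=
  \matrix_(x, y) A x (vtx y).2.

Definition e_vec (m : nat) (a : 'I_m) : 'rV[F2]_m := delta_mx 0 a.

Definition lin_broadcast_sol (n m h : nat) (R B : 'M[F2]_(n, m))
  (beta : 'M[F2]_(h, m)) : Prop :=
  forall (u : 'I_n) (a : 'I_m), R u a = 1 ->
    exists alpha : 'rV[F2]_(h + m),
      e_vec a = alpha *m col_mx beta (diag_mx (row u B)).
Arguments lin_broadcast_sol {n m h} R B beta.

(* A solution beta amounts to a "decoder": a matrix K whose rows lie in the
   row space of beta and whose row v_(u,a) equals e_a off the support of B_u.
   Disjointness makes phi(K) fit G, and rk phi(K) <= rk K <= h. Conversely,
   for C = phi(A) fitting G, keeping one column of C per requested block gives
   a decoder whose rows lie in the row space of C, so a basis of that space,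
   of size rk C, is a solution. *)
From Stdlib Require Import Classical Wf_nat.
From mathcomp Require Import all_boot all_order all_algebra.
Set Implicit Arguments. Unset Strict Implicit. Unset Printing Implicit Defensive.
Import GRing.Theory.
Local Open Scope ring_scope.

Lemma F2_eq0_or1 (x : F2) : x = 0 \/ x = 1.
Proof. by case: x => [[|[|k]] // lt2]; [left | right]; apply/val_inj. Qed.

Lemma F2_neq1 (x : F2) : x <> 1 -> x = 0.
Proof. by case: (F2_eq0_or1 x). Qed.

Lemma exists_least_nat (P : nat -> Prop) :
  (exists k, P k) -> exists r, P r /\ forall k, P k -> (r <= k)%N.
Proof.
move=> exP; have dec k : P k \/ ~ P k by apply: classic.
have [r [[Pr r_least] _]] := dec_inh_nat_subset_has_unique_least_element P dec exP.
by exists r; split=> // k /r_least /leP.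
Qed.

Section BroadcastSolutions.

Variables (n m : nat) (R B : 'M[F2]_(n, m)).

Local Notation V := 'I_(nV R).

Lemma vtx_req (x : V) : R (vtx x).1 (vtx x).2 = 1.
Proof. exact: (eqP (valP (enum_val (x : 'I_#|{: reqT R}|)))). Qed.

Lemma vtx_onto (u : 'I_n) (a : 'I_m) : R u a = 1 -> exists x : V, vtx x = (u, a).
Proof.
move=> /eqP Rua; exists (enum_rank (exist _ (u, a) Rua : reqT R)).
by rewrite /vtx enum_rankK.
Qed.

Definition decoder (K : 'M[F2]_(nV R, m)) : Prop :=
  forall x b, B (vtx x).1 b = 0 -> K x b = (b == (vtx x).2)%:R.

Lemma broadcast_solP h (beta : 'M[F2]_(h, m)) :
  lin_broadcast_sol R B beta <->
  exists K : 'M[F2]_(nV R, m), (K <= beta)%MS /\ decoder K.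
Proof.
split=> [sol | [K [/submxP [D ->] decK]] u a /vtx_onto [x vx]].
- pose al (x : V) := odflt 0 [pick alpha | e_vec (vtx x).2 ==
                 alpha *m col_mx beta (diag_mx (row (vtx x).1 B))].
  have alP (x : V) :
      e_vec (vtx x).2 = al x *m col_mx beta (diag_mx (row (vtx x).1 B)).
    rewrite /al; case: pickP => [alpha /eqP // | none].
    have [alpha ealpha] := sol _ _ (vtx_req x).
    by move: (none alpha); rewrite -ealpha eqxx.
  pose X := \matrix_(x, j) lsubmx (al x) 0 j.
  exists (X *m beta); split=> [|x b Bb0]; first exact: submxMl.
  have := congr1 (fun v : 'rV_m => v 0 b) (alP x).
  rewrite -[al x]hsubmxK mul_row_col mul_mx_diag !mxE Bb0 mulr0 addr0 => ->.
  by apply: eq_bigr => j _; rewrite mxE.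
- pose d := row x D *m beta.
  exists (row_mx (row x D) (e_vec a - d)); rewrite mul_row_col.
  suff -> : (e_vec a - d) *m diag_mx (row u B) = e_vec a - d by rewrite addrC subrK.
  have dxb b : B u b = 0 -> d 0 b = (b == a)%:R.
    by move=> Bub; rewrite /d -row_mul mxE decK vx.
  apply/matrixP => i b; rewrite (ord1 i) mul_mx_diag mxE [in X in _ * X]mxE.
  case: (F2_eq0_or1 (B u b)) => Bub; rewrite Bub ?mulr1 // mulr0.
  by rewrite mxE [(- d) _ _]mxE dxb // /e_vec mxE eqxx /= subrr.
Qed.

Lemma broadcast_sol_id : lin_broadcast_sol R B (1%:M : 'M[F2]_m).
Proof.
move=> u a _; exists (row_mx (e_vec a) 0).
by rewrite mul_row_col mul0mx addr0 mulmx1.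
Qed.

Definition col_rep_mx : 'M[F2]_(m, nV R) := \matrix_(b, y) (b == (vtx y).2)%:R.

Lemma col_rep_mul (A : 'M[F2]_(nV R, m)) : col_rep A = A *m col_rep_mx.
Proof.
apply/matrixP => x y; rewrite !mxE (bigD1 (vtx y).2) //= big1 ?addr0.
  by rewrite mxE eqxx mulr1.
by move=> b nb; rewrite mxE (negbTE nb) mulr0.
Qed.

Lemma mxrank_col_rep (A : 'M[F2]_(nV R, m)) : (\rank (col_rep A) <= \rank A)%N.
Proof. by rewrite col_rep_mul mxrankM_maxl. Qed.

Lemma decoder_fits (K : 'M[F2]_(nV R, m)) :
  disjoint_supports R B -> decoder K -> fits R B (col_rep K).
Proof.
move=> dRB decK; have B0 (x : V) : B (vtx x).1 (vtx x).2 = 0.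
  by apply: F2_neq1 => B1; case: (dRB _ _ (conj (vtx_req x) B1)).
split=> [x | x y _ no_edge]; rewrite mxE decK ?B0 ?eqxx //.
  by case: eqP => // ayx; case: no_edge; right.
by apply: F2_neq1 => Bxy; apply: no_edge; left.
Qed.

Definition requester (b : 'I_m) : option V := [pick y : V | (vtx y).2 == b].

Lemma requester_vtx b y : requester b = Some y -> (vtx y).2 = b.
Proof. by rewrite /requester; case: pickP => // y' /eqP ? [<-]. Qed.

Lemma requester_req (x : V) : exists y, requester (vtx x).2 = Some y.
Proof.
rewrite /requester; case: pickP => [y _ | none]; first by exists y.
by have := none x; rewrite eqxx.
Qed.

(* Unrequested columns are sent to 0: fitting says nothing about them. *)
Definition req_col_sel : 'M[F2]_(nV R, m) :=
  \matrix_(y, b) if requester b is Some y' then (y == y')%:R else 0.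

Lemma mul_req_col_sel (C : 'M[F2]_(nV R)) x b :
  (C *m req_col_sel) x b = if requester b is Some y then C x y else 0.
Proof.
rewrite mxE; case E: (requester b) => [y|]; last first.
  by rewrite big1 // => z _; rewrite mxE E mulr0.
rewrite (bigD1 y) //= big1 ?addr0 => [|z nzy]; rewrite mxE E ?eqxx ?mulr1 //.
by rewrite (negbTE nzy) mulr0.
Qed.

Lemma decoder_of_fits (A : 'M[F2]_(nV R, m)) :
  fits R B (col_rep A) -> decoder (col_rep A *m req_col_sel).
Proof.
move=> [diag1 off0] x b Bb0; rewrite mul_req_col_sel.
case E: (requester b) => [y|]; last first.
  by case: eqP => // bx; have [y] := requester_req x; rewrite -bx E.
have vy := requester_vtx E.
case: eqP => [bx | nbx]; first by rewrite -(diag1 x) !mxE vy bx.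
apply: off0 => [xy | [|]]; first by apply: nbx; rewrite -vy -xy.
  by rewrite vy Bb0 => /eqP; rewrite eq_sym oner_eq0.
by rewrite vy => /esym.
Qed.

Lemma broadcast_sol_of_fits (A : 'M[F2]_(nV R, m)) :
  fits R B (col_rep A) ->
  lin_broadcast_sol R B (row_base (col_rep A) *m req_col_sel).
Proof.
move=> fitA; apply/broadcast_solP; exists (col_rep A *m req_col_sel).
by split; [apply: submxMr; rewrite eq_row_base | apply: decoder_of_fits].
Qed.

Lemma fits_of_broadcast_sol h (beta : 'M[F2]_(h, m)) :
  disjoint_supports R B -> lin_broadcast_sol R B beta ->
  exists A : 'M[F2]_(nV R, m), fits R B (col_rep A) /\ (\rank (col_rep A) <= h)%N.
Proof.
move=> dRB /broadcast_solP [K [sKbeta decK]]; exists K.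
split; first exact: decoder_fits.
rewrite (leq_trans (mxrank_col_rep K)) // (leq_trans (mxrankS sKbeta)) //.
exact: rank_leq_row.
Qed.

End BroadcastSolutions.

Theorem theorem2 (n m : nat) (R B : 'M[F2]_(n, m)) :
  disjoint_supports R B ->
  exists r : nat,
    ((exists beta : 'M[F2]_(r, m), lin_broadcast_sol R B beta) /\
     (forall (h : nat) (beta : 'M[F2]_(h, m)),
        lin_broadcast_sol R B beta -> (r <= h)%N)) /\
    ((exists A : 'M[F2]_(nV R, m), fits R B (col_rep A) /\ \rank (col_rep A) = r) /\
     (forall A : 'M[F2]_(nV R, m), fits R B (col_rep A) -> (r <= \rank (col_rep A))%N)).
Proof.
move=> dRB.
pose fitting_rank (k : nat) :=
  exists A : 'M[F2]_(nV R, m), fits R B (col_rep A) /\ \rank (col_rep A) = k.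
have [r [[A [fitA <-]] r_least]] :
    exists r, fitting_rank r /\ forall k, fitting_rank k -> (r <= k)%N.
  apply: exists_least_nat.
  have [A [fitA _]] := fits_of_broadcast_sol dRB (@broadcast_sol_id _ _ R B).
  by exists (\rank (col_rep A)), A.
exists (\rank (col_rep A)); split; split.
- by eexists; apply: broadcast_sol_of_fits.
- move=> h beta sol; have [A' [fitA' le_h]] := fits_of_broadcast_sol dRB sol.
  by apply: leq_trans le_h; apply: r_least; exists A'.
- by exists A.
- by move=> A' fitA'; apply: r_least; exists A'.
Qed.
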